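(* Let $G$ be a group with identity $e$, let $A$ be a set with at least two elements, and let $\tau : A^G \to A^G$ be a lazy cellular automaton with unique active transition $p \in A^S$ (where $S \subseteq G$ is finite with $e \in S$) and writing symbol $a \in A \setminus \{ p(e) \}$. Assume that $p$ is quasi-constant with non-constant element $r \in S$. \begin{enumerate} \item If $a \neq p(s)$ for all $s \in S$, then $\mathrm{ord}(\tau)=2$. \item If $r \neq e$ and $a= p(r)$, then $\mathrm{ord}(\tau)$ is finite if and only if there exists $n \geq 2$ such that $r^n \in S$. Moreover, in this case, $\mathrm{ord}(\tau) = \min \{ n \geq 2 : r^n \in S \}$. \item If $r = e$ and $a = p(s)$ for all $s \in S \setminus \{e\}$, then $\mathrm{ord}(\tau)$ is finite if and only if there exists $n \geq 2$ such that for every word $w\in (S\setminus\{e\})^{n-1}$ there exists a subword $v\sqsubseteq w$ with $\theta(v)^{-1}\in S$. In that case, $\mathrm{ord}(\tau)$ is the minimum $n \geq 2$ satisfying this property. \end{enumerate}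
   Context: $A^G$ is the set of all maps $G \to A$, with the shift action $(g\cdot x)(h) := x(hg)$ for $g,h \in G$, $x \in A^G$. A cellular automaton is a map $\tau : A^G \to A^G$ for which there are a finite $S \subseteq G$ and a local map $\mu : A^S \to A$ with $\tau(x)(g) = \mu((g\cdot x)|_S)$ for all $x \in A^G$, $g \in G$. $\tau$ is lazy if there is such a local defining map $\mu : A^S \to A$ with $e \in S$ and a pattern $p \in A^S$ such that for all $z \in A^S$: $\mu(z) = z(e)$ if and only if $z \neq p$; then $p$ is the unique active transition of $\tau$ and $a := \mu(p) \in A \setminus\{p(e)\}$ is its writing symbol. $\tau^k$ denotes the $k$-fold composition ($\tau^0$ the identity), and $\mathrm{ord}(\tau) := |\{\tau^k : k \in \mathbb{N}\}|$ with $\mathbb{N} = \{0,1,2,\dots\}$. A pattern $p \in A^S$ is quasi-constant if $p$ is not constant and there is $r \in S$ such that $p|_{S\setminus\{r\}}$ is constant; such $r$ is the non-constant element of $p$. A word of length $m$ on $T \subseteq G$ is an element $(s_1,\dots,s_m) \in T^m$; $\theta(s_1,\dots,s_m) := s_1 s_2 \cdots s_m \in G$; $v$ is a subword of $w=(s_1,\dots,s_m)$, written $v \sqsubseteq w$, if $v = (s_i, s_{i+1},\dots,s_j)$ for some $1 \le i \le j \le m$. *)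

From Stdlib Require Import List Arith.
Import ListNotations.


Record group := Group {
  carrier :> Type;
  gmul : carrier -> carrier -> carrier;
  gone : carrier;
  ginv : carrier -> carrier;
  gmulA : forall x y z, gmul x (gmul y z) = gmul (gmul x y) z;
  gmul1g : forall x, gmul gone x = x;
  gmulg1 : forall x, gmul x gone = x;
  gmulVg : forall x, gmul (ginv x) x = gone;
  gmulgV : forall x, gmul x (ginv x) = gone
}.

Section CA.
Variables (G : group) (A : Type).

Definition shift (g : G) (x : G -> A) : G -> A := fun h => x (gmul G h g).

Definition agree_on (S : list G) (z z' : G -> A) : Prop :=
  forall s, In s S -> z s = z' s.

(* tau is a cellular automaton with memory set S and local map mu
   (mu only depends on the values on S, i.e. mu : A^S -> A) *)
Definition is_ca_with (tau : (G -> A) -> (G -> A)) (S : list G)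
  (mu : (G -> A) -> A) : Prop :=
  (forall z z', agree_on S z z' -> mu z = mu z') /\
  (forall x g, tau x g = mu (shift g x)).

Definition lazy_ca (tau : (G -> A) -> (G -> A)) (S : list G) (p : G -> A)
  (a : A) : Prop :=
  exists mu, is_ca_with tau S mu /\ In (gone G) S /\
    (forall z, mu z = z (gone G) <-> ~ agree_on S z p) /\
    mu p = a.

Definition iter_ca (tau : (G -> A) -> (G -> A)) (k : nat) := Nat.iter k tau.

Definition ord_eq (tau : (G -> A) -> (G -> A)) (n : nat) : Prop :=
  exists l : list ((G -> A) -> (G -> A)),
    NoDup l /\ length l = n /\
    (forall f, In f l <-> exists k, f = iter_ca tau k).

Definition ord_finite (tau : (G -> A) -> (G -> A)) : Prop :=
  exists n, ord_eq tau n.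

Definition constant_on (S : list G) (p : G -> A) : Prop :=
  forall s t, In s S -> In t S -> p s = p t.

Definition quasi_constant_at (S : list G) (p : G -> A) (r : G) : Prop :=
  ~ constant_on S p /\ In r S /\
  (forall s t, In s S -> In t S -> s <> r -> t <> r -> p s = p t).

End CA.

Definition gpow (G : group) (r : G) (n : nat) : G := Nat.iter n (gmul G r) (gone G).

Definition theta (G : group) (w : list G) : G := fold_right (gmul G) (gone G) w.

Definition subword (T : Type) (v w : list T) : Prop :=
  v <> [] /\ exists w1 w2, w = w1 ++ v ++ w2.

Definition word_property (G : group) (S : list G) (n : nat) : Prop :=
  forall w : list G, length w = n - 1 ->
    (forall s, In s w -> In s S /\ s <> gone G) ->
    exists v, subword G v w /\ In (ginv G (theta G v)) S.

From Stdlib Require Import List Arith Lia Wf_nat Classical FunctionalExtensionality ClassicalEpsilon.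
Import ListNotations.

(* A lazy automaton only ever writes its symbol a, so a cell holding a keeps it.  Hence
   tau^i = tau^j with i < j forces tau^j = tau^(j-1), and ord(tau) is the least n with
   tau^n = tau^(n-1): the least n such that p can no longer occur after n-1 steps.
   If a differs from every p(s), a written cell never takes part in an occurrence, so
   tau^2 = tau.
   If a = p(r) with r <> e, an occurrence at g after k steps forces one at r g a step
   earlier, hence one at r^k g initially; it writes a at r^(k+1) g, which is impossible when
   r^(k+1) is in S and differs from r.  Conversely, a single a placed at r^n creeps towards e
   by one cell per step.
   If r = e, an occurrence at g after k steps forces one at s g a step earlier for some s in
   S \ {e}; these letters form a word of length k, and a subword v with theta(v)^-1 in S
   would give two occurrences at different times, the later one on a cell already holding
   a.  Conversely, for a word without such subwords, p(e) placed on its suffix products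
   reaches e only after n-1 steps. *)

Section GroupFacts.
Variable G : group.

Lemma gmul_cancel_l (x y z : G) : gmul G x y = gmul G x z -> y = z.
Proof.
  intros E. rewrite <- (gmul1g G y), <- (gmul1g G z), <- (gmulVg G x), <- !gmulA, E.
  reflexivity.
Qed.

Lemma gmul_cancel_r (x y z : G) : gmul G y x = gmul G z x -> y = z.
Proof.
  intros E. rewrite <- (gmulg1 G y), <- (gmulg1 G z), <- (gmulgV G x), !gmulA, E.
  reflexivity.
Qed.

Lemma gmulKV (u v : G) : gmul G (ginv G u) (gmul G u v) = v.
Proof. rewrite gmulA, gmulVg, gmul1g. reflexivity. Qed.

Lemma gmul_eq_inv (s u v : G) : gmul G (gmul G s u) v = v -> s = ginv G u.
Proof.
  intros E. rewrite <- (gmul1g G v) in E at 2. apply gmul_cancel_r in E.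
  rewrite <- (gmulg1 G s), <- (gmulgV G u), gmulA, E, gmul1g. reflexivity.
Qed.

Lemma ginv_one : ginv G (gone G) = gone G.
Proof. rewrite <- (gmul1g G (ginv G (gone G))). apply gmulgV. Qed.

Lemma gpow0 (r : G) : gpow G r 0 = gone G.
Proof. reflexivity. Qed.

Lemma gpowS (r : G) n : gpow G r (S n) = gmul G r (gpow G r n).
Proof. reflexivity. Qed.

Lemma gpow_add (r : G) m n : gpow G r (m + n) = gmul G (gpow G r m) (gpow G r n).
Proof.
  induction m as [|m IH].
  - rewrite gpow0, gmul1g. reflexivity.
  - rewrite Nat.add_succ_l, !gpowS, IH, gmulA. reflexivity.
Qed.

Lemma gpow1 (r : G) : gpow G r 1 = r.
Proof. apply gmulg1. Qed.

Lemma gpowSr (r : G) n : gpow G r (S n) = gmul G (gpow G r n) r.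
Proof. rewrite <- Nat.add_1_r, gpow_add, gpow1. reflexivity. Qed.

Lemma theta_app (u v : list G) : theta G (u ++ v) = gmul G (theta G u) (theta G v).
Proof.
  induction u as [|s u IH]; simpl.
  - rewrite gmul1g. reflexivity.
  - rewrite IH, gmulA. reflexivity.
Qed.

Lemma not_word_property1 (M : list G) : ~ word_property G M 1.
Proof.
  intros Hw. destruct (Hw [] eq_refl) as [v [[Hv [w1 [w2 E]]] _]]; [intros s []|].
  apply Hv. destruct w1, v; easy.
Qed.

End GroupFacts.

Lemma app_eq_app_length {T} (l1 l2 l3 l4 : list T) :
  l1 ++ l2 = l3 ++ l4 -> length l1 <= length l3 -> exists l, l3 = l1 ++ l /\ l2 = l ++ l4.
Proof.
  intros E Hlen. destruct (app_eq_app _ _ _ _ E) as [l [[-> ->]|[-> ->]]]; eauto.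
  rewrite length_app in Hlen. destruct l; [|simpl in Hlen; lia].
  exists []. rewrite !app_nil_r. auto.
Qed.

Section Orbit.
Variables (G : group) (A : Type) (tau : (G -> A) -> G -> A).
Local Notation iter := (iter_ca G A tau).

Lemma iter_fix_stable k : iter (S k) = iter k -> forall j, k <= j -> iter j = iter k.
Proof.
  intros Hk j Hj. induction Hj as [|j Hj IH]; [reflexivity|].
  rewrite <- Hk. unfold iter_ca in *. extensionality x. simpl. rewrite IH. reflexivity.
Qed.

Lemma iter_fix_mono j k : j <= k -> iter (S j) = iter j -> iter (S k) = iter k.
Proof.
  intros Hjk Hj. rewrite (iter_fix_stable j Hj k), (iter_fix_stable j Hj (S k)); auto.
Qed.

Lemma iter_seq_NoDup n :
  (forall i j, i < j < n -> iter i <> iter j) -> NoDup (map iter (seq 0 n)).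
Proof.
  intros Hinj. apply NoDup_map_NoDup_ForallPairs; [|apply seq_NoDup].
  intros i j Hi Hj E. apply in_seq in Hi, Hj.
  destruct (lt_eq_lt_dec i j) as [[Hij|Hij]|Hij]; auto.
  - exfalso. apply (Hinj i j); [lia|exact E].
  - exfalso. apply (Hinj j i); [lia|auto].
Qed.

Lemma ord_eq_iter_seq k :
  (forall i j, i < j < S k -> iter i <> iter j) -> iter (S k) = iter k -> ord_eq G A tau (S k).
Proof.
  intros Hinj Hk. exists (map iter (seq 0 (S k))). split; [|split].
  - apply iter_seq_NoDup, Hinj.
  - rewrite length_map, length_seq. reflexivity.
  - intros f. rewrite in_map_iff. split.
    + intros [j [<- _]]. eauto.
    + intros [j ->]. destruct (le_lt_dec j k) as [Hj|Hj].
      * exists j. split; [reflexivity|apply in_seq; lia].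
      * exists k. split; [symmetry; apply iter_fix_stable; auto; lia|apply in_seq; lia].
Qed.

Lemma ord_eq_ge m n : ord_eq G A tau m -> (forall i j, i < j < n -> iter i <> iter j) -> n <= m.
Proof.
  intros [l [Hl [<- Hmem]]] Hinj.
  rewrite <- (length_seq n 0), <- (length_map iter).
  apply NoDup_incl_length; [apply iter_seq_NoDup, Hinj|].
  intros f Hf. apply in_map_iff in Hf as [j [<- _]]. apply Hmem. eauto.
Qed.

Lemma ord_eq_uniq m n : ord_eq G A tau m -> ord_eq G A tau n -> m = n.
Proof.
  intros [l [Hl [<- Hmem]]] [l' [Hl' [<- Hmem']]].
  apply Nat.le_antisymm; apply NoDup_incl_length; auto;
    intros f Hf; [apply Hmem', Hmem|apply Hmem, Hmem']; exact Hf.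
Qed.

Section NoReturn.
Hypothesis iter_no_return :
  forall i j, i <= j -> iter i = iter (S j) -> iter (S j) = iter j.

Lemma iter_inj_before_fix k :
  (forall j, j < k -> iter (S j) <> iter j) -> forall i j, i < j <= k -> iter i <> iter j.
Proof.
  intros Hk i [|j] Hij E; [lia|].
  apply (Hk j); [lia|]. apply (iter_no_return i); [lia|exact E].
Qed.

Lemma ord_eqE m :
  ord_eq G A tau m <->
  exists k, m = S k /\ iter (S k) = iter k /\ forall j, j < k -> iter (S j) <> iter j.
Proof.
  split.
  - intros Hm.
    assert (Hfix : exists k, iter (S k) = iter k).
    { apply NNPP. intros Hno.
      assert (S m <= m); [|lia].
      apply (ord_eq_ge m (S m) Hm). intros i j Hij.
      apply (iter_inj_before_fix m); [|lia]. intros j' _ E. apply Hno. eauto. }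
    destruct (dec_inh_nat_subset_has_unique_least_element _ (fun k => classic _) Hfix)
      as [k [[Hk Hleast] _]].
    assert (Hfirst : forall j, j < k -> iter (S j) <> iter j).
    { intros j Hj E. specialize (Hleast j E). lia. }
    exists k. split; [|auto].
    apply (ord_eq_uniq m (S k) Hm), ord_eq_iter_seq; auto.
    intros i j Hij. apply (iter_inj_before_fix k); auto. lia.
  - intros [k [-> [Hk Hfirst]]]. apply ord_eq_iter_seq; auto.
    intros i j Hij. apply (iter_inj_before_fix k); auto. lia.
Qed.

Lemma ord_finiteE : ord_finite G A tau <-> exists k, iter (S k) = iter k.
Proof.
  split.
  - intros [m Hm]. apply ord_eqE in Hm as [k [_ [Hk _]]]. eauto.
  - intros Hfix.
    destruct (dec_inh_nat_subset_has_unique_least_element _ (fun k => classic _) Hfix)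
      as [k [[Hk Hleast] _]].
    exists (S k). apply ord_eqE. exists k. split; [reflexivity|split; [exact Hk|]].
    intros j Hj E. specialize (Hleast j E). lia.
Qed.

Lemma ord_first_fix (P : nat -> Prop) :
  (forall k, iter (S k) = iter k <-> exists n, 2 <= n <= S k /\ P n) ->
  (ord_finite G A tau <-> exists n, 2 <= n /\ P n) /\
  (forall m, ord_eq G A tau m <-> 2 <= m /\ P m /\ forall n, 2 <= n -> P n -> m <= n).
Proof.
  intros HP. split.
  - rewrite ord_finiteE. split.
    + intros [k Hk]. apply HP in Hk as [n [Hn Pn]]. exists n. split; [lia|exact Pn].
    + intros [n [Hn Pn]]. exists (pred n). apply HP. exists n. split; [lia|exact Pn].
  - intros m. rewrite ord_eqE. split.
    + intros [k [-> [Hk Hfirst]]].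
      assert (Hleast : forall n, 2 <= n -> P n -> S k <= n).
      { intros n Hn Pn. apply Nat.nlt_ge. intros Hlt.
        apply (Hfirst (pred n)); [lia|]. apply HP. exists n. split; [lia|exact Pn]. }
      apply HP in Hk as [n [Hn Pn]].
      replace n with (S k) in Pn by (specialize (Hleast n (proj1 Hn) Pn); lia).
      split; [lia|auto].
    + intros [Hm [Pm Hleast]]. exists (pred m). split; [lia|split].
      * apply HP. exists m. split; [lia|exact Pm].
      * intros j Hj E. apply HP in E as [n [Hn Pn]].
        specialize (Hleast n (proj1 Hn) Pn). lia.
Qed.

End NoReturn.
End Orbit.

Section Lazy.
Variables (G : group) (A : Type) (tau : (G -> A) -> G -> A) (M : list G) (p : G -> A) (a : A).
Hypothesis tau_lazy : lazy_ca G A tau M p a.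
Hypothesis a_neq_p1 : a <> p (gone G).

Definition occurs (y : G -> A) (g : G) : Prop := forall s, In s M -> y (gmul G s g) = p s.

Definition paint (C : G -> Prop) (u v : A) (h : G) : A :=
  if excluded_middle_informative (C h) then u else v.

Lemma paint_in C u v h : C h -> paint C u v h = u.
Proof. unfold paint. destruct (excluded_middle_informative (C h)); tauto. Qed.

Lemma paint_out C u v h : ~ C h -> paint C u v h = v.
Proof. unfold paint. destruct (excluded_middle_informative (C h)); tauto. Qed.

Lemma one_in_M : In (gone G) M.
Proof. destruct tau_lazy as [mu [_ [He _]]]. exact He. Qed.

Lemma tau_occurs y g : occurs y g -> tau y g = a.
Proof.
  destruct tau_lazy as [mu [[Hloc Htau] [_ [_ Hmu]]]].
  intros Hg. rewrite Htau, <- Hmu. apply Hloc, Hg.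
Qed.

Lemma tau_not_occurs y g : ~ occurs y g -> tau y g = y g.
Proof.
  destruct tau_lazy as [mu [[_ Htau] [_ [Hiff _]]]].
  intros Hg. rewrite Htau, (proj2 (Hiff (shift G A g y)) Hg). unfold shift.
  rewrite gmul1g. reflexivity.
Qed.

Lemma occurs_one y g : occurs y g -> y g = p (gone G).
Proof. intros Hg. rewrite <- (gmul1g G g) at 1. apply Hg, one_in_M. Qed.

Lemma tau_neq_a y g : tau y g <> a -> tau y g = y g.
Proof.
  intros Hg. apply tau_not_occurs. intros Hocc. apply Hg, tau_occurs, Hocc.
Qed.

Lemma tau_a_stable y g : y g = a -> tau y g = a.
Proof.
  intros Hg. destruct (classic (occurs y g)) as [Hocc|Hocc].
  - apply tau_occurs, Hocc.
  - rewrite tau_not_occurs; auto.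
Qed.

Lemma iter_a_stable x g i j : i <= j -> Nat.iter i tau x g = a -> Nat.iter j tau x g = a.
Proof.
  intros Hij Hi. induction Hij as [|j Hij IH]; [exact Hi|].
  apply tau_a_stable, IH.
Qed.

Lemma iter_no_return i j :
  i <= j -> iter_ca G A tau i = iter_ca G A tau (S j) ->
  iter_ca G A tau (S j) = iter_ca G A tau j.
Proof.
  unfold iter_ca. intros Hij E. extensionality x. extensionality g. simpl.
  destruct (classic (occurs (Nat.iter j tau x) g)) as [Hocc|Hocc].
  - rewrite tau_occurs by exact Hocc. symmetry.
    apply (iter_a_stable x g i j Hij). rewrite E. apply tau_occurs, Hocc.
  - apply tau_not_occurs, Hocc.
Qed.

Lemma iter_fix_of_no_occurrence k :
  (forall x g, ~ occurs (Nat.iter k tau x) g) -> iter_ca G A tau (S k) = iter_ca G A tau k.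
Proof.
  intros Hno. unfold iter_ca. extensionality x. extensionality g.
  apply tau_not_occurs, Hno.
Qed.

Lemma tau_neq_id : iter_ca G A tau 1 <> iter_ca G A tau 0.
Proof.
  intros E. apply a_neq_p1.
  assert (Hp : tau p (gone G) = p (gone G)) by exact (equal_f (equal_f E p) (gone G)).
  rewrite <- Hp. symmetry. apply tau_occurs.
  intros s _. rewrite gmulg1. reflexivity.
Qed.

Section FreshSymbol.
Hypothesis a_notin_p : forall s, In s M -> a <> p s.

Lemma no_occurrence_after_tau y g : ~ occurs (tau y) g.
Proof.
  intros Hg. apply a_neq_p1. rewrite <- (occurs_one _ _ Hg). symmetry.
  apply tau_occurs. intros s Hs.
  rewrite <- (tau_neq_a y (gmul G s g)); [exact (Hg s Hs)|].
  rewrite (Hg s Hs). apply not_eq_sym, a_notin_p, Hs.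
Qed.

Lemma ord_eq_2 : ord_eq G A tau 2.
Proof.
  apply (ord_eqE G A tau iter_no_return). exists 1. split; [reflexivity|split].
  - apply iter_fix_of_no_occurrence. intros x g. apply no_occurrence_after_tau.
  - intros j Hj. replace j with 0 by lia. exact tau_neq_id.
Qed.

End FreshSymbol.

Section OffCenter.
Variable r : G.
Hypothesis r_in_M : In r M.
Hypothesis r_neq_1 : r <> gone G.
Hypothesis a_eq_pr : a = p r.
Hypothesis p_off_r : forall s, In s M -> s <> r -> p s = p (gone G).

Lemma occurs_tau_back_r y h : occurs (tau y) h -> occurs y (gmul G r h).
Proof.
  intros Hh. apply NNPP. intros Hno.
  assert (Hrh : y (gmul G r h) = a).
  { rewrite <- tau_not_occurs by exact Hno. rewrite (Hh r r_in_M). symmetry. exact a_eq_pr. }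
  apply a_neq_p1. rewrite <- (occurs_one _ _ Hh). symmetry. apply tau_occurs.
  intros s Hs. destruct (classic (s = r)) as [->|Hsr]; [rewrite Hrh; exact a_eq_pr|].
  rewrite <- (tau_neq_a y (gmul G s h)); [exact (Hh s Hs)|].
  rewrite (Hh s Hs), p_off_r by auto. apply not_eq_sym, a_neq_p1.
Qed.

Lemma occurs_iter_back_r x k h :
  occurs (Nat.iter k tau x) h -> occurs x (gmul G (gpow G r k) h).
Proof.
  revert h. induction k as [|k IH]; intros h Hh.
  - rewrite gpow0, gmul1g. exact Hh.
  - rewrite gpowSr, <- gmulA. apply IH, occurs_tau_back_r, Hh.
Qed.

Lemma no_occurrence_of_pow_in k :
  In (gpow G r (S k)) M -> gpow G r (S k) <> r -> forall x g, ~ occurs (Nat.iter k tau x) g.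
Proof.
  intros Hin Hneq x g Hg.
  assert (Hx : x (gmul G (gpow G r (S k)) g) = a).
  { rewrite gpowS, <- gmulA, (occurs_iter_back_r x k g Hg r r_in_M). symmetry. exact a_eq_pr. }
  apply a_neq_p1. rewrite <- (p_off_r _ Hin Hneq), <- (Hg _ Hin).
  symmetry. apply (iter_a_stable x _ 0 k); [lia|exact Hx].
Qed.

Section SingleSymbol.
Variable k : nat.
Hypothesis no_small_pow : forall n, 2 <= n <= S k -> ~ In (gpow G r n) M.

(* After i steps, the single a initially at r^(k+1) has spread to r^(k+1-i), ..., r^(k+1). *)
Definition pow_cell (i : nat) (h : G) : Prop :=
  exists m, S k <= i + m /\ m <= S k /\ h = gpow G r m.

Lemma pow_cell_pow i m : S k <= i + m -> m <= S k -> pow_cell i (gpow G r m).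
Proof. intros Hm1 Hm2. exists m. auto. Qed.

Lemma pow_in_M_eq_r n : 1 <= n <= S k -> In (gpow G r n) M -> gpow G r n = r.
Proof.
  intros Hn Hin. destruct (Nat.eq_dec n 1) as [->|Hn1]; [apply gpow1|].
  exfalso. apply (no_small_pow n); [lia|exact Hin].
Qed.

Lemma tau_paint_pow i :
  i <= k -> tau (paint (pow_cell i) a (p (gone G))) = paint (pow_cell (S i)) a (p (gone G)).
Proof.
  intros Hi. extensionality h.
  destruct (classic (pow_cell (S i) h)) as [HSi|HSi].
  - rewrite (paint_in _ _ _ _ HSi).
    destruct (classic (pow_cell i h)) as [Hi'|Hi'].
    + apply tau_a_stable, paint_in, Hi'.
    + destruct HSi as [m [Hm1 [Hm2 ->]]].
      assert (Hm : S k = S i + m) by (apply NNPP; intros Hne; apply Hi', pow_cell_pow; lia).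
      apply tau_occurs. intros s Hs. destruct (classic (s = r)) as [->|Hsr].
      * rewrite <- a_eq_pr, <- gpowS. apply paint_in, pow_cell_pow; lia.
      * rewrite (p_off_r s) by auto. apply paint_out. intros [m' [Hm1' [Hm2' E]]].
        assert (Hs' : s = gpow G r (m' - m)).
        { apply (gmul_cancel_r G (gpow G r m)). rewrite E, <- gpow_add. f_equal. lia. }
        apply Hsr. rewrite Hs'. apply pow_in_M_eq_r; [lia|]. rewrite <- Hs'. exact Hs.
  - assert (Hi' : ~ pow_cell i h) by (intros [m [Hm1 [Hm2 ->]]]; apply HSi, pow_cell_pow; lia).
    rewrite (paint_out _ _ _ _ HSi), tau_not_occurs; [apply paint_out, Hi'|].
    intros Hocc. specialize (Hocc r r_in_M).
    destruct (classic (pow_cell i (gmul G r h))) as [[m [Hm1 [Hm2 E]]]|Hri].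
    + replace h with (gpow G r (m - 1)) in HSi; [apply HSi, pow_cell_pow; lia|].
      apply (gmul_cancel_l G r). rewrite E, <- gpowS. f_equal. lia.
    + rewrite (paint_out _ _ _ _ Hri) in Hocc. apply a_neq_p1. rewrite a_eq_pr, Hocc.
      reflexivity.
Qed.

Lemma iter_paint_pow i :
  i <= S k ->
  Nat.iter i tau (paint (pow_cell 0) a (p (gone G))) = paint (pow_cell i) a (p (gone G)).
Proof.
  induction i as [|i IH]; intros Hi; [reflexivity|].
  simpl. rewrite IH by lia. apply tau_paint_pow. lia.
Qed.

Lemma iter_moves_of_pow_notin : iter_ca G A tau (S k) <> iter_ca G A tau k.
Proof.
  intros E. apply a_neq_p1.
  assert (Hk := equal_f (equal_f E (paint (pow_cell 0) a (p (gone G)))) (gone G)).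
  unfold iter_ca in Hk. rewrite !iter_paint_pow in Hk by lia.
  rewrite paint_in, paint_out in Hk; [exact Hk| |apply (pow_cell_pow _ 0); lia].
  intros [m [Hm1 [Hm2 E1]]]. apply r_neq_1.
  rewrite <- (pow_in_M_eq_r m), <- E1; [reflexivity|lia|]. rewrite <- E1. exact one_in_M.
Qed.

End SingleSymbol.

Lemma iter_fixE_pow k :
  iter_ca G A tau (S k) = iter_ca G A tau k <-> exists n, 2 <= n <= S k /\ In (gpow G r n) M.
Proof.
  split.
  - intros E. apply NNPP. intros Hno. apply (iter_moves_of_pow_notin k); [|exact E].
    intros n Hn Hin. apply Hno. eauto.
  - intros [n [Hn Hin]].
    assert (Hj : exists j, j <= k /\ In (gpow G r (S j)) M /\ gpow G r (S j) <> r).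
    { destruct (classic (gpow G r n = r)) as [Er|Er].
      - exists (n - 2).
        assert (E1 : gpow G r (S (n - 2)) = gone G).
        { apply (gmul_cancel_r G r). rewrite <- gpowSr, gmul1g. replace (S (S (n - 2))) with n by lia.
          exact Er. }
        rewrite E1. split; [lia|split; [exact one_in_M|auto]].
      - exists (n - 1). replace (S (n - 1)) with n by lia. split; [lia|auto]. }
    destruct Hj as [j [Hjk [Hj Hjr]]].
    apply (iter_fix_mono G A tau j k Hjk), iter_fix_of_no_occurrence.
    apply no_occurrence_of_pow_in; assumption.
Qed.

Lemma ord_quasi_constant_off_center :
  (ord_finite G A tau <-> exists n, 2 <= n /\ In (gpow G r n) M) /\
  (forall m, ord_eq G A tau m <->
     2 <= m /\ In (gpow G r m) M /\ forall n, 2 <= n -> In (gpow G r n) M -> m <= n).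
Proof. apply (ord_first_fix G A tau iter_no_return), iter_fixE_pow. Qed.

End OffCenter.

Section AtCenter.
Hypothesis p_off_1 : forall s, In s M -> s <> gone G -> a = p s.

Lemma occurs_later_not x i j h u :
  i < j -> occurs (Nat.iter i tau x) h -> In u M -> ~ occurs (Nat.iter j tau x) (gmul G u h).
Proof.
  intros Hij Hh Hu Hj. apply a_neq_p1. rewrite <- (occurs_one _ _ Hj). symmetry.
  destruct (classic (u = gone G)) as [->|Hu1].
  - rewrite gmul1g. apply (iter_a_stable x h (S i) j); [lia|]. apply tau_occurs, Hh.
  - apply (iter_a_stable x _ i j); [lia|]. rewrite (Hh u Hu). symmetry. apply p_off_1; auto.
Qed.

Lemma occurs_tau_back_letter y h :
  occurs (tau y) h -> exists s, In s M /\ s <> gone G /\ occurs y (gmul G s h).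
Proof.
  intros Hh. apply NNPP. intros Hno.
  apply a_neq_p1. rewrite <- (occurs_one _ _ Hh). symmetry. apply tau_occurs.
  intros s Hs. destruct (classic (s = gone G)) as [->|Hs1].
  - rewrite gmul1g, <- (tau_neq_a y h); [exact (occurs_one _ _ Hh)|].
    rewrite (occurs_one _ _ Hh). apply not_eq_sym, a_neq_p1.
  - rewrite <- (tau_not_occurs y (gmul G s h)); [exact (Hh s Hs)|].
    intros Hocc. apply Hno. eauto.
Qed.

Lemma occurs_iter_word x t h :
  occurs (Nat.iter t tau x) h ->
  exists w, length w = t /\ (forall s, In s w -> In s M /\ s <> gone G) /\
    forall w1 w2, w = w1 ++ w2 -> occurs (Nat.iter (length w1) tau x) (gmul G (theta G w2) h).
Proof.
  revert h. induction t as [|t IH]; intros h Hh.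
  - exists []. split; [reflexivity|split; [intros s []|]].
    intros w1 w2 E. symmetry in E. apply app_eq_nil in E as [-> ->].
    rewrite gmul1g. exact Hh.
  - destruct (occurs_tau_back_letter _ _ Hh) as [s [Hs [Hs1 Hsh]]].
    destruct (IH _ Hsh) as [w [Hlen [Hw Hsuf]]].
    exists (w ++ [s]). split; [rewrite length_app, Hlen, Nat.add_1_r; reflexivity|split].
    + intros s' Hs'. apply in_app_or in Hs' as [Hs'|[<-|[]]]; auto.
    + intros w1 w2 E. destruct (classic (w2 = [])) as [->|Hw2].
      * rewrite app_nil_r in E. subst w1.
        rewrite length_app, Hlen, Nat.add_1_r, gmul1g. exact Hh.
      * destruct (app_eq_app_length w1 w2 w [s]) as [u [Ew Ew2]]; [congruence| |].
        { apply (f_equal (@length G)) in E. rewrite !length_app in E.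
          destruct w2; [contradiction|simpl in E; lia]. }
        subst w2. rewrite theta_app. simpl. rewrite gmulg1, <- gmulA. apply Hsuf, Ew.
Qed.

Lemma no_occurrence_of_word_property k :
  word_property G M (S k) -> forall x g, ~ occurs (Nat.iter k tau x) g.
Proof.
  intros Hwp x g Hg. destruct (occurs_iter_word x k g Hg) as [w [Hlen [Hw Hsuf]]].
  destruct (Hwp w) as [v [[Hv [w1 [w2 Ew]]] Hin]]; [rewrite Hlen; lia|exact Hw|].
  assert (Hearly := Hsuf w1 (v ++ w2) Ew).
  assert (Hlate := Hsuf (w1 ++ v) w2 ltac:(rewrite <- app_assoc; exact Ew)).
  assert (Hlt : length w1 < length (w1 ++ v))
    by (rewrite length_app; destruct v; [contradiction|simpl; lia]).
  rewrite theta_app, <- gmulA in Hearly.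
  apply (occurs_later_not x _ _ _ _ Hlt Hearly Hin). rewrite gmulKV. exact Hlate.
Qed.

Section BadWord.
Variable w : list G.
Hypothesis w_letters : forall s, In s w -> In s M /\ s <> gone G.
Hypothesis w_bad : forall v, subword G v w -> ~ In (ginv G (theta G v)) M.

(* After t steps, p(e) survives exactly on the products of the suffixes of w of length at
   most |w| - t. *)
Definition suffix_cell (t : nat) (h : G) : Prop :=
  exists w1 v, w = w1 ++ v /\ t <= length w1 /\ h = theta G v.

Lemma suffix_cell_theta t w1 v : w = w1 ++ v -> t <= length w1 -> suffix_cell t (theta G v).
Proof. intros Ew Hlen. exists w1, v. auto. Qed.

Lemma suffix_cell_occurs t w1 v :
  w = w1 ++ v -> length w1 = t -> occurs (paint (suffix_cell t) (p (gone G)) a) (theta G v).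
Proof.
  intros Ew Hlen s Hs. destruct (classic (s = gone G)) as [->|Hs1].
  - rewrite gmul1g. apply paint_in, (suffix_cell_theta _ w1); [exact Ew|lia].
  - rewrite <- (p_off_1 s) by assumption. apply paint_out. intros [w1' [v' [Ew' [Hlen' Hsv]]]].
    rewrite Ew in Ew'. destruct (app_eq_app_length _ _ _ _ Ew') as [u [-> ->]]; [lia|].
    rewrite theta_app, gmulA in Hsv. apply gmul_eq_inv in Hsv.
    destruct (classic (u = [])) as [->|Hu].
    + apply Hs1. rewrite Hsv. apply ginv_one.
    + apply (w_bad u); [split; [exact Hu|exists w1, v'; exact Ew]|].
      rewrite <- Hsv. exact Hs.
Qed.

Lemma tau_paint_suffix t :
  S t <= length w ->
  tau (paint (suffix_cell t) (p (gone G)) a) = paint (suffix_cell (S t)) (p (gone G)) a.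
Proof.
  intros Ht. extensionality h.
  destruct (classic (suffix_cell (S t) h)) as [HSt|HSt].
  - assert (Ht' : suffix_cell t h).
    { destruct HSt as [w1 [v [Ew [Hlen ->]]]]. apply (suffix_cell_theta _ w1); [exact Ew|lia]. }
    rewrite (paint_in _ _ _ _ HSt), tau_not_occurs; [apply paint_in, Ht'|].
    intros Hocc. destruct HSt as [w1 [v [Ew [Hlen ->]]]].
    assert (Hw1 : w1 <> []) by (intros ->; simpl in Hlen; lia).
    destruct (exists_last Hw1) as [w1' [s ->]].
    assert (Hs : In s w) by (rewrite Ew; apply in_or_app; left; apply in_or_app; right; left; auto).
    destruct (w_letters s Hs) as [HsM Hs1].
    apply a_neq_p1. rewrite (p_off_1 s HsM Hs1), <- (Hocc s HsM). apply paint_in.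
    rewrite length_app in Hlen. simpl in Hlen.
    apply (suffix_cell_theta _ w1' (s :: v)); [rewrite Ew, <- app_assoc; reflexivity|lia].
  - rewrite (paint_out _ _ _ _ HSt). destruct (classic (suffix_cell t h)) as [Ht'|Ht'].
    + apply tau_occurs. destruct Ht' as [w1 [v [Ew [Hlen ->]]]].
      apply (suffix_cell_occurs t w1 v Ew). apply NNPP. intros Hne.
      apply HSt, (suffix_cell_theta _ w1); [exact Ew|lia].
    + apply tau_a_stable, paint_out, Ht'.
Qed.

Lemma iter_paint_suffix t :
  t <= length w ->
  Nat.iter t tau (paint (suffix_cell 0) (p (gone G)) a) = paint (suffix_cell t) (p (gone G)) a.
Proof.
  induction t as [|t IH]; intros Ht; [reflexivity|].
  simpl. rewrite IH by lia. apply tau_paint_suffix, Ht.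
Qed.

Lemma iter_moves_of_bad_word : iter_ca G A tau (S (length w)) <> iter_ca G A tau (length w).
Proof.
  intros E. apply a_neq_p1.
  assert (Hw := equal_f (equal_f E (paint (suffix_cell 0) (p (gone G)) a)) (gone G)).
  unfold iter_ca in Hw. simpl in Hw. rewrite iter_paint_suffix in Hw by lia.
  rewrite paint_in in Hw; [|apply (suffix_cell_theta _ w []); [rewrite app_nil_r|]; reflexivity].
  rewrite <- Hw. symmetry.
  apply tau_occurs, (suffix_cell_occurs _ w []); [rewrite app_nil_r|]; reflexivity.
Qed.

End BadWord.

Lemma iter_fixE_word k :
  iter_ca G A tau (S k) = iter_ca G A tau k <-> exists n, 2 <= n <= S k /\ word_property G M n.
Proof.
  split.
  - intros E. assert (Hwp : word_property G M (S k)).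
    { apply NNPP. intros Hno. unfold word_property in Hno.
      apply not_all_ex_not in Hno as [w Hno].
      apply imply_to_and in Hno as [Hlen Hno]. apply imply_to_and in Hno as [Hw Hno].
      apply (iter_moves_of_bad_word w Hw).
      - intros v Hv Hin. apply Hno. eauto.
      - rewrite Hlen. replace (S k - 1) with k by lia. exact E. }
    exists (S k). split; [|exact Hwp].
    destruct k; [exfalso; exact (not_word_property1 G M Hwp)|lia].
  - intros [n [Hn Hwp]].
    apply (iter_fix_mono G A tau (pred n) k); [lia|].
    apply iter_fix_of_no_occurrence, no_occurrence_of_word_property.
    replace (S (pred n)) with n by lia. exact Hwp.
Qed.

Lemma ord_quasi_constant_at_center :
  (ord_finite G A tau <-> exists n, 2 <= n /\ word_property G M n) /\
  (forall m, ord_eq G A tau m <->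
     2 <= m /\ word_property G M m /\ forall n, 2 <= n -> word_property G M n -> m <= n).
Proof. apply (ord_first_fix G A tau iter_no_return), iter_fixE_word. Qed.

End AtCenter.

End Lazy.

Theorem theorem1 (G : group) (A : Type) (tau : (G -> A) -> (G -> A))
  (S : list G) (p : G -> A) (a : A) (r : G) :
  (exists a1 a2 : A, a1 <> a2) ->
  lazy_ca G A tau S p a ->
  a <> p (gone G) ->
  quasi_constant_at G A S p r ->
  (* 1 *)
  ((forall s, In s S -> a <> p s) -> ord_eq G A tau 2) /\
  (* 2 *)
  (r <> gone G -> a = p r ->
     (ord_finite G A tau <-> exists n, 2 <= n /\ In (gpow G r n) S) /\
     (forall m, ord_eq G A tau m <->
        (2 <= m /\ In (gpow G r m) S /\
         forall n, 2 <= n -> In (gpow G r n) S -> m <= n))) /\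
  (* 3 *)
  (r = gone G -> (forall s, In s S -> s <> gone G -> a = p s) ->
     (ord_finite G A tau <-> exists n, 2 <= n /\ word_property G S n) /\
     (forall m, ord_eq G A tau m <->
        (2 <= m /\ word_property G S m /\
         forall n, 2 <= n -> word_property G S n -> m <= n))).
Proof.
  intros _ Hlazy Hap1 [_ [Hr Hconst]].
  split; [|split].
  - exact (ord_eq_2 G A tau S p a Hlazy Hap1).
  - intros Hr1 Har. apply (ord_quasi_constant_off_center G A tau S p a Hlazy Hap1 r Hr Hr1 Har).
    intros s Hs Hsr. apply Hconst; auto. exact (one_in_M G A tau S p a Hlazy).
  - intros -> Hpa. exact (ord_quasi_constant_at_center G A tau S p a Hlazy Hap1 Hpa).
Qed.
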